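(* Let $p$ be a prime, $\tau\in\mathbb{Z}$, $a,b$ positive integers, and $\alpha,\beta$ nonnegative integers such that $p^\beta$ exactly divides $\gcd(a,b)$ and $p^\alpha$ divides $a+b$. Then $p^{\alpha-\beta}$ divides \[ \binom{a\tau+a-1}{a}\binom{b\tau+b}{b} \] (i.e. the $p$-adic valuation of this integer is at least $\alpha-\beta$).
   Context: Binomial coefficients with negative top argument are defined by $\binom{n}{k}=(-1)^k\binom{-n+k-1}{k}$ for $n<0$, $k\geq0$. *)

From mathcomp Require Import all_boot all_order all_algebra.
Set Implicit Arguments. Unset Strict Implicit. Unset Printing Implicit Defensive.
Import GRing.Theory Num.Theory.
Local Open Scope ring_scope.

(* Generalized binomial coefficient binom(n, k) for n : int, k : nat.
   For n >= 0 it is the usual 'C(n, k); for n < 0 it is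
   (-1)^k * binom(-n + k - 1, k), as in the paper. *)
Definition binz (n : int) (k : nat) : int :=
  match n with
  | Posz m => ('C(m, k))%:Z
  | Negz m => (-1) ^+ k * ('C(m + k, k))%:Z   (* Negz m = -(m+1), so -n+k-1 = m+k *)
  end.

From mathcomp Require Import all_boot all_order all_algebra zify.
Import GRing.Theory Num.Theory.
Set Implicit Arguments.
Unset Strict Implicit.
Unset Printing Implicit Defensive.

(* By Kummer's theorem the p-adic valuation of a binomial coefficient
   'C(m + n, m) counts the levels k at which adding m and n in base p carries
   past p^k.  For every level p^k with beta < k <= alpha, p^k divides a + b but
   not a, and then for tau = t > 0 a carry occurs at that level in
   a + (a t - 1) or in b + b t; the two factors together therefore have at
   least alpha - beta carries.  For negative tau the binomials with negative
   top turn into the same ones with the roles of a and b exchanged. *)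

Definition carry (q m n : nat) : bool := q <= m %% q + n %% q.

Lemma logn_fact_sum p n N : prime p -> n < N ->
  logn p n`! = \sum_(1 <= k < N) n %/ p ^ k.
Proof.
move=> p_pr ltnN; rewrite logn_fact // (@big_cat_nat _ _ _ n.+1 1 N) //=.
rewrite [X in _ = _ + X]big_nat_cond [X in _ = _ + X]big1 ?addn0 //.
move=> k /andP[/andP[ltnk _] _].
apply: divn_small; apply: leq_trans ltnk _; apply: ltnW.
exact: ltn_expl (prime_gt1 p_pr).
Qed.

Lemma logn_bin_carries p m n N : prime p -> m + n < N ->
  logn p 'C(m + n, m) = \sum_(1 <= k < N) carry (p ^ k) m n.
Proof.
move=> p_pr ltmnN.
have ltmN : m < N by apply: leq_ltn_trans ltmnN; rewrite leq_addr.
have ltnN : n < N by apply: leq_ltn_trans ltmnN; rewrite leq_addl.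
have logn_facts :
    logn p (m + n)`! = logn p 'C(m + n, m) + (logn p m`! + logn p n`!).
  have := bin_fact (leq_addr n m); rewrite addKn => <-.
  by rewrite lognM ?muln_gt0 ?fact_gt0 ?bin_gt0 ?leq_addr // lognM ?fact_gt0.
move: logn_facts; rewrite !(@logn_fact_sum p _ N) //.
rewrite (eq_bigr (fun k => m %/ p ^ k + n %/ p ^ k + carry (p ^ k) m n));
  last by move=> k _; rewrite divnD ?expn_gt0 ?prime_gt0.
rewrite !big_split /=; lia.
Qed.

Lemma no_carry_modnD q m n : 0 < q -> ~~ carry q m n ->
  (m + n) %% q = m %% q + n %% q.
Proof.
by move=> q_gt0; rewrite /carry => /negbTE no_carry; rewrite modnD // no_carry mul0n subn0.
Qed.

Lemma modn_add_compl q a b : 0 < q -> q %| a + b -> ~~ (q %| a) ->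
  a %% q + b %% q = q.
Proof.
move=> q_gt0; rewrite /dvdn modnD // -lt0n; move: (a %% q) (b %% q) => r s.
by case: leqP => le_rs_q; rewrite ?mul1n ?mul0n ?subn0 => /eqP; lia.
Qed.

(* If neither pair carries, (a + (a t - 1)) %% q + 1 + (b + b t) %% q would be a
   multiple of q lying strictly between q and 2 q. *)
Lemma carry_compl_multiples q a b t :
  0 < q -> q %| a + b -> ~~ (q %| a) -> 0 < t ->
  carry q a (a * t - 1) || carry q b (b * t).
Proof.
move=> q_gt0 q_dvd_ab q_ndvd_a t_gt0.
apply/norP => -[no_carry_a no_carry_b].
have at_gt0 : 0 < a * t.
  by rewrite muln_gt0 t_gt0 andbT lt0n; apply: contraNneq q_ndvd_a => ->.
set u := (a + (a * t - 1)) %% q; set v := (b + b * t) %% q.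
have ab_compl := modn_add_compl q_gt0 q_dvd_ab q_ndvd_a.
have u_ge : a %% q <= u by rewrite /u no_carry_modnD // leq_addr.
have v_ge : b %% q <= v by rewrite /v no_carry_modnD // leq_addr.
have u_lt : u < q by rewrite ltn_mod.
have v_lt : v < q by rewrite ltn_mod.
have q_dvd_uv : q %| u + 1 + v.
  rewrite /dvdn /u /v modnDmr -addnA modnDml.
  have -> : a + (a * t - 1) + (1 + (b + b * t)) = (a + b) * t.+1.
    by rewrite mulnSr mulnDl; lia.
  by rewrite -/(dvdn _ _) dvdn_mulr.
clearbody u v; move: (a %% q) (b %% q) ab_compl u_ge v_ge => r s rs r_le s_le.
have : q <= u + 1 + v - q by apply: dvdn_leq; [lia | rewrite dvdn_sub].
lia.
Qed.

Lemma ndvdn_summand d q a b : ~~ (d %| gcdn a b) -> d %| q -> q %| a + b ->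
  ~~ (q %| a).
Proof.
move=> d_ndvd_gcd d_dvd_q q_dvd_ab; apply/negP => q_dvd_a.
have q_dvd_b : q %| b by rewrite -(dvdn_addr b q_dvd_a).
apply: (negP d_ndvd_gcd); apply: dvdn_trans d_dvd_q _.
by rewrite dvdn_gcd q_dvd_a.
Qed.

Lemma subn_leq_sum_pos (F : nat -> nat) l m n N : l <= m -> n <= N ->
  (forall k, m <= k < n -> 0 < F k) -> n - m <= \sum_(l <= k < N) F k.
Proof.
move=> le_lm le_nN F_pos; case: (leqP m n) => [le_mn|]; last first.
  by move/ltnW; rewrite -subn_eq0 => /eqP ->.
rewrite (@big_cat_nat _ _ _ m l N) ?(leq_trans le_mn) //=.
rewrite (@big_cat_nat _ _ _ n m N) //=.
apply: leq_trans (leq_addl _ _); apply: leq_trans (leq_addr _ _).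
rewrite -[n - m]muln1 -sum_nat_const_nat big_nat_cond [X in _ <= X]big_nat_cond.
by apply: leq_sum => k /andP[mkn _]; apply: F_pos.
Qed.

Lemma pfactor_dvdn_bin_mul p a b t alpha beta :
  prime p -> 0 < a -> 0 < b -> 0 < t ->
  ~~ (p ^ beta.+1 %| gcdn a b) -> p ^ alpha %| a + b ->
  p ^ (alpha - beta) %| 'C(a + (a * t - 1), a) * 'C(b + b * t, b).
Proof.
move=> p_pr a_gt0 b_gt0 t_gt0 gcd_ndvd pa_dvd_ab.
set N := (a + (a * t - 1) + (b + b * t)).+1 + alpha.
rewrite pfactor_dvdn // ?muln_gt0 ?bin_gt0 ?leq_addr //.
rewrite lognM ?bin_gt0 ?leq_addr //.
rewrite !(@logn_bin_carries p _ _ N) ?/N; [|lia..].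
rewrite -big_split -[alpha - beta]/(alpha.+1 - beta.+1) /=.
apply: subn_leq_sum_pos => [||k /andP[lt_beta_k le_k_alpha]]; [by []|lia|].
have pk_dvd_ab : p ^ k %| a + b.
  by apply: dvdn_trans pa_dvd_ab; rewrite dvdn_exp2l.
have pk_ndvd_a : ~~ (p ^ k %| a).
  by apply: (ndvdn_summand gcd_ndvd) pk_dvd_ab; rewrite dvdn_exp2l.
have pk_gt0 : 0 < p ^ k by rewrite expn_gt0 prime_gt0.
have := carry_compl_multiples pk_gt0 pk_dvd_ab pk_ndvd_a t_gt0.
by case: carry; case: carry.
Qed.

Local Open Scope ring_scope.

Theorem lemma4p11 (p : nat) (tau : int) (a b alpha beta : nat) :
  prime p -> (0 < a)%N -> (0 < b)%N ->
  (p ^ beta %| gcdn a b)%N -> ~~ (p ^ beta.+1 %| gcdn a b)%N ->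
  (p ^ alpha %| a + b)%N ->
  ((p ^ (alpha - beta))%:Z %|
     binz (a%:Z * tau + a%:Z - 1) a * binz (b%:Z * tau + b%:Z) b)%Z.
Proof.
move=> p_pr a_gt0 b_gt0 _ gcd_ndvd pa_dvd_ab; rewrite dvdzE abszM /=.
case: tau => [[|t]|t].
- have -> : a%:Z * 0 + a%:Z - 1 = (a.-1)%N by lia.
  by rewrite /= bin_small ?prednK // mul0n dvdn0.
- have -> : a%:Z * t.+1%:Z + a%:Z - 1 = (a + (a * t.+1 - 1))%N by lia.
  have -> : b%:Z * t.+1%:Z + b%:Z = (b + b * t.+1)%N by lia.
  exact: pfactor_dvdn_bin_mul.
- have -> : a%:Z * Negz t + a%:Z - 1 = Negz (a * t) by rewrite NegzE; lia.
  case: t => [|t].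
    have -> : b%:Z * Negz 0 + b%:Z = 0 by rewrite NegzE; lia.
    by rewrite /= (bin_small b_gt0) muln0 dvdn0.
  have -> : b%:Z * Negz t.+1 + b%:Z = Negz (b * t.+1 - 1).
    by rewrite !NegzE; lia.
  rewrite /= !abszM !absz_sign !mul1n /= mulnC.
  rewrite (addnC (b * _ - 1)%N) (addnC (a * _)%N).
  by apply: pfactor_dvdn_bin_mul; rewrite 1?gcdnC 1?addnC.
Qed.
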